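(* Let $T$ be a finite tree and let $P=p_0p_1\dots p_k$ ($k\ge1$) be a path in $T$ such that each of $p_1,\dots,p_{k-1}$ has degree $2$ in $T$. Let $B$ be the vertex set of the component containing $p_k$ of the graph obtained from $T$ by deleting the edges of $P$. Let $T'$ be the tree obtained from $T$ by deleting all edges between $p_k$ and $\Gamma(p_k)\setminus\{p_{k-1}\}$ and adding the edges between $p_0$ and $\Gamma(p_k)\setminus\{p_{k-1}\}$ instead. Then for every $\ell\ge1$, \[\omega_{\ell}(p_0,T[B\cup P])-\omega_{\ell}(p_0,P)\leq \omega_{\ell}(p_0,T'[B\cup P])-\omega_{\ell}(p_0,P).\]
   Context: $\Gamma(v)$ is the set of neighbours of $v$ in $T$. For a graph $G$ containing the vertices of $B$ and $P$, $G[B\cup P]$ is the subgraph of $G$ induced by $B\cup\{p_0,\dots,p_k\}$. For a graph $G$, a vertex $x$ and $\ell\ge1$, $\omega_\ell(x,G)$ is the number of walks of length $\ell$ in $G$ starting at $x$. $P$ is regarded as a graph (the path). *)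

From HB Require Import structures.
From mathcomp Require Import all_boot all_order all_algebra.
Set Implicit Arguments. Unset Strict Implicit. Unset Printing Implicit Defensive.

Definition simple_graph (V : finType) (e : rel V) : Prop :=
  symmetric e /\ irreflexive e.

Definition has_cycle (V : finType) (e : rel V) : Prop :=
  exists s : seq V, [/\ 3 <= size s, uniq s & cycle e s].

Definition is_tree (V : finType) (e : rel V) : Prop :=
  [/\ simple_graph e, 0 < #|V|, (forall x y, connect e x y) & ~ has_cycle e].

Definition deg (V : finType) (e : rel V) (x : V) : nat := #|[set y | e x y]|.

Definition nbhd (V : finType) (e : rel V) (x : V) : {set V} := [set y | e x y].

(* The path p_0 p_1 ... p_k given by p : nat -> V (only p 0 .. p k matter). *)
Definition is_path_in (V : finType) (e : rel V) (p : nat -> V) (k : nat) : Prop :=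
  (forall i j, i <= k -> j <= k -> p i = p j -> i = j) /\
  (forall i, i < k -> e (p i) (p i.+1)).

Definition path_edge (V : finType) (p : nat -> V) (k : nat) : rel V :=
  fun u v => [exists i : 'I_k, ((u == p i) && (v == p i.+1))
                            || ((v == p i) && (u == p i.+1))].

Definition path_verts (V : finType) (p : nat -> V) (k : nat) : {set V} :=
  [set p (nat_of_ord i) | i : 'I_k.+1].

Definition del_path_edges (V : finType) (e : rel V) (p : nat -> V) (k : nat) : rel V :=
  fun u v => e u v && ~~ path_edge p k u v.

Definition compB (V : finType) (e : rel V) (p : nat -> V) (k : nat) : {set V} :=
  [set v | connect (del_path_edges e p k) (p k) v].

Definition switched (V : finType) (e : rel V) (p : nat -> V) (k : nat) : rel V :=
  let N := nbhd e (p k) :\ p k.-1 in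
  fun u v =>
    [|| [&& e u v, ~~ ((u == p k) && (v \in N)) & ~~ ((v == p k) && (u \in N))],
        (u == p 0) && (v \in N)
      | (v == p 0) && (u \in N)].

Definition induced (V : finType) (e : rel V) (S : {set V}) : rel V :=
  fun u v => [&& e u v, u \in S & v \in S].

Definition walks (V : finType) (l : nat) (x : V) (e : rel V) : nat :=
  #|[set w : l.-tuple V | path e x w]|.

From mathcomp Require Import all_boot all_order all_algebra.
From mathcomp Require Import zify.
Import Order.TTheory GRing.Theory Num.Theory.
Set Implicit Arguments. Unset Strict Implicit. Unset Printing Implicit Defensive.

(* Write G = T[B ∪ P] and G' = T'[B ∪ P].  Reversing the path (p_i ↦ p_(k-i),
   identity on B \ P) embeds G into G', since B hangs at p_k in G and at p_0
   in G'.  Walks from p_0 in G are coupled with walks from p_0 in G' through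
   an injective neighbour map: for k = 2m the identity until the walk reaches
   p_m, the reversal afterwards.  For k odd, walks of length l from p_1 in G
   are matched with walks from p_0 in G' by the shift p_i ↦ p_(i-1), with p_0
   sent to a vertex h of Γ(p_k) \ {p_(k-1)}, up to the middle of the path and
   the reversal afterwards; since G' has no isolated vertex, walk counts in G'
   grow with the length.  If Γ(p_k) = {p_(k-1)} then T' = T. *)

Section Walks.
Variable V : finType.

Fixpoint nwalks (e : rel V) (l : nat) (x : V) : nat :=
  if l is l'.+1 then \sum_(y | e x y) nwalks e l' y else 1.

Lemma walksE e l x : walks l x e = nwalks e l x.
Proof.
elim: l x => [|l IH] x.
  rewrite /walks (_ : [set w : 0.-tuple V | path e x w] = setT).
    by rewrite cardsT card_tuple.
  by apply/setP => w; rewrite !inE tuple0.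
rewrite /= -(eq_bigr _ (fun y _ => IH y)) /walks.
have -> : [set w : l.+1.-tuple V | path e x w] =
  (fun u : V * l.-tuple V => [tuple of u.1 :: u.2]) @:
     [set u : V * l.-tuple V | e x u.1 && path e u.1 u.2].
  apply/setP => w; rewrite inE; apply/idP/imsetP.
    case: w => [[|y w'] //= Hs] Hp.
    have Hs' : size w' == l by [].
    exists (y, Tuple Hs'); first by rewrite inE.
    by apply: val_inj.
  by case=> [[y w']]; rewrite inE => /= Hp ->.
rewrite card_imset; last first.
  by move=> [y1 w1] [y2 w2] /(congr1 val) /= [-> /val_inj ->].
rewrite -sum1_card (eq_bigl (fun u : V * l.-tuple V => e x u.1 && path e u.1 u.2));
  last by move=> u; rewrite inE.
rewrite -(pair_big_dep (fun y : V => e x y) (fun y (w : l.-tuple V) => path e y w)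
                       (fun _ _ => 1)).
by apply: eq_bigr => y _; rewrite sum1_card; apply: eq_card => w; rewrite inE.
Qed.

Lemma nwalks_le_sim (e1 e2 : rel V) (R : V -> V -> Prop) :
  (forall x y, R x y -> exists f : V -> V,
      {in e1 x &, injective f} /\
      (forall a, e1 x a -> e2 y (f a) /\ R a (f a))) ->
  forall l x y, R x y -> nwalks e1 l x <= nwalks e2 l y.
Proof.
move=> Rsim; elim=> [|l IH] x y Rxy //=.
have [f [f_inj f_sim]] := Rsim x y Rxy.
apply: (@leq_trans (\sum_(a | e1 x a) nwalks e2 l (f a))).
  by apply: leq_sum => a e1xa; apply: IH; case: (f_sim a e1xa).
have -> : \sum_(a | e1 x a) nwalks e2 l (f a) =
          \sum_(b in f @: [set a | e1 x a]) nwalks e2 l b.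
  rewrite big_imset /=; last by move=> a b; rewrite !inE; apply: f_inj.
  by apply: eq_bigl => a; rewrite inE.
apply: sub_le_big => // [x0 y0|b /imsetP [a]]; first exact: leq_addr.
rewrite inE => e1xa ->.
by case: (f_sim a e1xa).
Qed.

Lemma nwalks_leS (e : rel V) (S : {set V}) :
  (forall x y, e x y -> y \in S) -> (forall x, x \in S -> exists y, e x y) ->
  forall l x, x \in S -> nwalks e l x <= nwalks e l.+1 x.
Proof.
move=> e_S S_nbr; elim=> [|l IH] x xS /=.
  by have [y exy] := S_nbr x xS; rewrite (bigD1 y) //= ltn_addr.
by apply: leq_sum => y exy; apply: IH; apply: e_S exy.
Qed.

Lemma connect_lastP (e : rel V) a b :
  connect e a b -> a != b -> exists2 u, connect e a u & e u b.
Proof.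
case/connectP => s es ->; case/lastP: s es => [|s u]; first by rewrite eqxx.
rewrite rcons_path last_rcons => /andP [es eu] _.
by exists (last a s) => //; apply/connectP; exists s.
Qed.

End Walks.

Section SwitchedPath.
Variables (V : finType) (T : rel V) (p : nat -> V) (k : nat).
Hypotheses (T_tree : is_tree T) (k_gt0 : 0 < k) (p_path : is_path_in T p k)
  (deg_inner : forall i, 1 <= i -> i <= k.-1 -> deg T (p i) = 2).

Local Notation P := (path_verts p k).
Local Notation B := (compB T p k).
Local Notation D := (del_path_edges T p k).
Local Notation S := (B :|: P).
Local Notation N := (nbhd T (p k) :\ p k.-1).
Local Notation G := (induced T S).
Local Notation G' := (induced (switched T p k) S).

Lemma T_sym x y : T x y = T y x.
Proof. by case: T_tree => [[T_sym _] _ _ _]; apply: T_sym. Qed.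

Lemma T_irr x : T x x = false.
Proof. by case: T_tree => [[_ T_irr] _ _ _]; apply: T_irr. Qed.

Lemma p_inj i j : i <= k -> j <= k -> p i = p j -> i = j.
Proof. by case: p_path => p_inj _; apply: p_inj. Qed.

Lemma T_step i : i < k -> T (p i) (p i.+1).
Proof. by case: p_path => _ T_step; apply: T_step. Qed.

Lemma path_vertsP x : reflect (exists2 i, i <= k & x = p i) (x \in P).
Proof.
apply: (iffP imsetP) => [[i _ ->]|[i le_ik ->]]; first by exists i; rewrite // -ltnS.
by exists (Ordinal (le_ik : i < k.+1)).
Qed.

Lemma mem_path_verts i : i <= k -> p i \in P.
Proof. by move=> le_ik; apply/path_vertsP; exists i. Qed.

Lemma path_edge_verts u v : path_edge p k u v -> u \in P /\ v \in P.
Proof.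
case/existsP => i /orP [] /andP [/eqP -> /eqP ->];
  split; apply: mem_path_verts; have := ltn_ord i; lia.
Qed.

Lemma path_edge_pp i j : i <= k -> j <= k ->
  path_edge p k (p i) (p j) = (j == i.+1) || (i == j.+1).
Proof.
move=> le_ik le_jk; apply/existsP/idP.
  case=> a /orP [] /andP [/eqP E1 /eqP E2]; have := ltn_ord a => lt_ak.
    have := p_inj le_ik (ltnW lt_ak) E1; have := p_inj le_jk lt_ak E2; lia.
  have := p_inj le_jk (ltnW lt_ak) E1; have := p_inj le_ik lt_ak E2; lia.
case/orP => /eqP E.
  have lt_ik : i < k by lia.
  by exists (Ordinal lt_ik); rewrite /= E !eqxx.
have lt_jk : j < k by lia.
by exists (Ordinal lt_jk); rewrite /= E !eqxx orbT.
Qed.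

Lemma inner_nbr i y : 1 <= i -> i < k -> T (p i) y -> y = p i.-1 \/ y = p i.+1.
Proof.
move=> i_gt0 lt_ik Ty.
have := deg_inner i_gt0 (_ : i <= k.-1); rewrite /deg => deg2.
have neq_p : p i.-1 != p i.+1 by apply/eqP => /p_inj; lia.
have sub_nbr : [set p i.-1; p i.+1] \subset [set y | T (p i) y].
  apply/subsetP => z; rewrite !inE => /orP [] /eqP ->; last exact: T_step.
  by rewrite T_sym (_ : i = i.-1.+1) ?T_step; lia.
have /eqP E : [set p i.-1; p i.+1] == [set y | T (p i) y].
  by rewrite eqEcard sub_nbr cards2 neq_p deg2 ?leqnn //; lia.
have : y \in [set y | T (p i) y] by rewrite inE.
by rewrite -E !inE => /orP [] /eqP ->; [left|right].
Qed.

Lemma inB x : (x \in B) = connect D (p k) x.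
Proof. by rewrite inE. Qed.

Lemma inner_notin_B j : 1 <= j -> j < k -> p j \notin B.
Proof.
move=> j_gt0 lt_jk; apply/negP; rewrite inB => pk_pj.
have neq_kj : p k != p j by apply/eqP => /p_inj; lia.
have [u _ /andP [Tu not_pe]] := connect_lastP pk_pj neq_kj.
rewrite T_sym in Tu; move: not_pe.
by case: (inner_nbr j_gt0 lt_jk Tu) => ->; rewrite path_edge_pp; lia.
Qed.

Lemma path_map_iota n a : (forall i, a <= i -> i < a + n -> T (p i) (p i.+1)) ->
  path T (p a) (map p (iota a.+1 n)) && (last (p a) (map p (iota a.+1 n)) == p (a + n)).
Proof.
elim: n a => [|n IH] a T_steps /=; first by rewrite addn0.
rewrite T_steps ?leqnn //; last lia.
have T_steps' i : a.+1 <= i -> i < a.+1 + n -> T (p i) (p i.+1).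
  by move=> ? ?; apply: T_steps; lia.
by have := IH a.+1 T_steps'; rewrite addnS addSn.
Qed.

(* A D-path from p_k back to p_0 closes the path P into a cycle of T. *)
Lemma p0_notin_B : p 0 \notin B.
Proof.
apply/negP; rewrite inB => /connectP [s Ds].
case/shortenP: Ds => s' Ds' uniq_s' _ last_s'.
case/lastP: s' Ds' uniq_s' last_s' => [|s'' y]; first by move=> _ _ /p_inj; lia.
rewrite last_rcons => Ds' uniq_s' Ey; subst y.
have outside_P x : x \in s'' -> x \notin P.
  move=> xs; apply/negP => /path_vertsP [j le_jk Ex]; subst x.
  move: uniq_s'; rewrite /= rcons_uniq mem_rcons inE.
  case/andP => /norP [_ pk_notin] /andP [p0_notin _].
  case: (ltngtP j k) => [lt_jk||E]; [|lia|by move: xs; rewrite E (negbTE pk_notin)].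
  case: j le_jk lt_jk xs p0_notin => [|j] _ lt_jk xs; first by rewrite xs.
  have : connect D (p k) (p j.+1).
    by apply: (path_connect Ds'); rewrite inE mem_rcons inE xs !orbT.
  by rewrite -inB (negbTE (inner_notin_B (ltn0Sn j) lt_jk)).
case: T_tree => _ _ _; apply; exists (map p (iota 0 k.+1) ++ s''); split.
- rewrite size_cat size_map size_iota.
  case: s'' Ds' {uniq_s' outside_P} => [|x s0] /=; last by lia.
  rewrite andbT /del_path_edges path_edge_pp //.
  by case: (ltnP 1 k) => //; lia.
- rewrite cat_uniq map_inj_in_uniq ?iota_uniq; last first.
    by move=> a b; rewrite !mem_iota => ? ? /p_inj; apply; lia.
  move: uniq_s'; rewrite /= rcons_uniq => /andP [_ /andP [_ ->]]; rewrite andbT /=.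
  apply/hasPn => x xs; apply/negP => x_in_p; have := outside_P _ xs; case/negP.
  move: x_in_p; rewrite inE => /orP [/eqP ->|/seq.mapP [j]].
    exact: mem_path_verts.
  by rewrite mem_iota => ? ->; apply: mem_path_verts; lia.
- rewrite /cycle /= rcons_cat cat_path.
  have := path_map_iota (n := k) (a := 0) (fun i _ lt_ik => T_step (lt_ik : i < k)).
  case/andP => -> /eqP ->; rewrite add0n /=.
  by apply: sub_path Ds' => a b /andP [].
Qed.

Lemma notin_B j : j < k -> p j \notin B.
Proof. by case: j => [|j] lt_jk; [apply: p0_notin_B | apply: inner_notin_B]. Qed.

Lemma T_path_adj_lt i j : i < k -> j <= k -> T (p i) (p j) -> j = i.+1 \/ i = j.+1.
Proof.
move=> lt_ik le_jk Tij; case: i lt_ik Tij => [|i] lt_ik Tij; last first.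
  by case: (inner_nbr (ltn0Sn i) lt_ik Tij) => /p_inj; lia.
case: j le_jk Tij => [|j] le_jk Tij; first by rewrite T_irr in Tij.
case: (ltngtP j.+1 k) => [lt_jk||E]; [|lia|].
  by rewrite T_sym in Tij; case: (inner_nbr (ltn0Sn j) lt_jk Tij) => /p_inj; lia.
case: (ltnP 1 k) => [lt_1k|]; last by left; lia.
have D_k0 : D (p k) (p 0).
  by rewrite /del_path_edges T_sym -E Tij E path_edge_pp //; lia.
by have := p0_notin_B; rewrite inB connect1.
Qed.

Lemma T_path_adj i j : i <= k -> j <= k -> T (p i) (p j) -> j = i.+1 \/ i = j.+1.
Proof.
move=> le_ik le_jk Tij; case: (ltnP i k) => [lt_ik|le_ki].
  exact: T_path_adj_lt.
case: (ltnP j k) => [lt_jk|le_kj].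
  by rewrite T_sym in Tij; case: (T_path_adj_lt lt_jk le_ik Tij); [right|left].
by rewrite (_ : i = j) ?T_irr in Tij; lia.
Qed.

Lemma S_notin_P x : x \in S -> x \notin P -> x \in B.
Proof. by rewrite inE => /orP [] // ->. Qed.

Lemma B_path_nonadj x j : x \in B -> x \notin P -> j < k -> T x (p j) = false.
Proof.
move=> xB xP lt_jk; apply/negP => Txj.
have D_xj : D x (p j).
  rewrite /del_path_edges Txj /=; apply/negP => /path_edge_verts [x_P _].
  by rewrite x_P in xP.
by have := notin_B lt_jk; rewrite inB (connect_trans _ (connect1 D_xj)) // -inB.
Qed.

Lemma N_notin_P x : x \in N -> x \notin P.
Proof.
rewrite !inE => /andP [neq_x Tx]; apply/negP => /path_vertsP [j le_jk Ex]; subst x.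
case: (T_path_adj (leqnn k) le_jk Tx) => E; first lia.
by move: neq_x; rewrite E /= eqxx.
Qed.

Lemma N_sub_B x : x \in N -> x \in B.
Proof.
move=> xN; have := xN; rewrite !inE => /andP [_ Tx].
rewrite connect1 // /del_path_edges Tx /=; apply/negP => /path_edge_verts [_ x_P].
by have := N_notin_P xN; rewrite x_P.
Qed.

Lemma p_in_S i : i <= k -> p i \in S.
Proof. by move=> le_ik; rewrite inE mem_path_verts ?orbT. Qed.

Lemma G_p0 y : G (p 0) y -> y = p 1.
Proof.
case/and3P => T0y _ yS; case: (boolP (y \in P)) => [/path_vertsP [j le_jk Ey]|yP].
  by subst y; case: (T_path_adj (leq0n k) le_jk T0y) => [->|] //; lia.
by have := B_path_nonadj (S_notin_P yS yP) yP k_gt0; rewrite T_sym T0y.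
Qed.

Lemma G_inner i y : 1 <= i -> i < k -> G (p i) y -> y = p i.-1 \/ y = p i.+1.
Proof. by move=> i_gt0 lt_ik /and3P [Tiy _ _]; apply: inner_nbr. Qed.

Lemma G_step a : a < k -> G (p a) (p a.+1) /\ G (p a.+1) (p a).
Proof.
move=> lt_ak; rewrite /induced !p_in_S ?(ltnW lt_ak) // !andbT T_step //.
by rewrite T_sym T_step.
Qed.

Lemma switched_path a b : a <= k -> b <= k -> T (p a) (p b) ->
  switched T p k (p a) (p b).
Proof.
move=> le_ak le_bk Tab; rewrite /switched Tab.
have /negbTE -> : p a \notin N by apply/negP => /N_notin_P; rewrite mem_path_verts.
have /negbTE -> : p b \notin N by apply/negP => /N_notin_P; rewrite mem_path_verts.
by rewrite !andbF.
Qed.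

Lemma G'_step a : a < k -> G' (p a) (p a.+1) /\ G' (p a.+1) (p a).
Proof.
move=> lt_ak; rewrite /induced !p_in_S ?(ltnW lt_ak) //.
by rewrite !switched_path ?(ltnW lt_ak) // ?T_step // T_sym T_step.
Qed.

Lemma G'_p0N h : h \in N -> G' (p 0) h /\ G' h (p 0).
Proof.
move=> hN; rewrite /induced p_in_S // inE N_sub_B // /switched hN !eqxx /=.
by rewrite !orbT.
Qed.

Definition rev_path x :=
  if [pick i : 'I_k.+1 | p i == x] is Some i then p (k - i) else x.

Lemma rev_path_p i : i <= k -> rev_path (p i) = p (k - i).
Proof.
rewrite /rev_path => le_ik; case: pickP => [j /eqP Ej | no_j].
  by rewrite (p_inj _ le_ik Ej) // -ltnS.
by have := no_j (Ordinal (le_ik : i < k.+1)); rewrite /= eqxx.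
Qed.

Lemma rev_path_id x : x \notin P -> rev_path x = x.
Proof.
rewrite /rev_path => xP; case: pickP => [j /eqP Ej | //].
by move: xP; rewrite -Ej mem_path_verts // -ltnS.
Qed.

Lemma rev_path_inj : injective rev_path.
Proof.
move=> x y; case: (boolP (x \in P)) => [/path_vertsP [i le_ik ->]|xP];
 case: (boolP (y \in P)) => [/path_vertsP [j le_jk ->]|yP].
- by rewrite !rev_path_p // => /p_inj E; rewrite (_ : i = j) //; apply/eqP; move: E; lia.
- by rewrite rev_path_p // rev_path_id // => E; move: yP; rewrite -E mem_path_verts //; lia.
- by rewrite rev_path_p // rev_path_id // => E; move: xP; rewrite E mem_path_verts //; lia.
- by rewrite !rev_path_id.
Qed.

Lemma rev_path_edge x y : G x y -> G' (rev_path x) (rev_path y).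
Proof.
move=> Gxy; have /and3P [Txy xS yS] := Gxy.
case: (boolP (x \in P)) => [/path_vertsP [i le_ik Ex]|xP];
 case: (boolP (y \in P)) => [/path_vertsP [j le_jk Ey]|yP].
- subst x y; rewrite !rev_path_p //.
  case: (T_path_adj le_ik le_jk Txy) => E; subst.
    rewrite (_ : k - i = (k - i.+1).+1); last lia.
    by case: (G'_step (_ : k - i.+1 < k)); [lia|].
  rewrite (_ : k - j = (k - j.+1).+1); last lia.
  by case: (G'_step (_ : k - j.+1 < k)); [lia|].
- subst x; rewrite (rev_path_id yP) rev_path_p //.
  case: (ltnP i k) => [lt_ik|le_ki].
    by have := B_path_nonadj (S_notin_P yS yP) yP lt_ik; rewrite T_sym Txy.
  rewrite (_ : i = k) ?subnn; last lia.
  case: (G'_p0N (_ : y \in N)) => //.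
  rewrite !inE (_ : i = k) in Txy *; last lia.
  rewrite Txy andbT; apply/negP => /eqP E; move: yP; rewrite E mem_path_verts //; lia.
- subst y; rewrite (rev_path_id xP) rev_path_p //.
  case: (ltnP j k) => [lt_jk|le_kj].
    by have := B_path_nonadj (S_notin_P xS xP) xP lt_jk; rewrite Txy.
  rewrite (_ : j = k) ?subnn; last lia.
  case: (G'_p0N (_ : x \in N)) => //.
  rewrite !inE (_ : j = k) in Txy *; last lia.
  rewrite T_sym Txy andbT; apply/negP => /eqP E; move: xP; rewrite E mem_path_verts //; lia.
- rewrite !rev_path_id // /induced xS yS /switched Txy.
  have /negbTE -> : x != p k by apply/eqP => E; move: xP; rewrite E mem_path_verts.
  by have /negbTE -> : y != p k by apply/eqP => E; move: yP; rewrite E mem_path_verts.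
Qed.

Lemma G_nbr x : x \in S -> exists y, G x y.
Proof.
move=> xS; case: (boolP (x \in P)) => [/path_vertsP [i le_ik ->]|xP].
  case: (ltnP i k) => [lt_ik|le_ki]; first by exists (p i.+1); case: (G_step lt_ik).
  rewrite (_ : i = k); last lia.
  exists (p k.-1); have lt_k1k : k.-1 < k by lia.
  by case: (G_step lt_k1k); rewrite (ltn_predK k_gt0).
have neq_kx : p k != x by apply/eqP => E; move: xP; rewrite -E mem_path_verts.
have pk_x : connect D (p k) x by rewrite -inB S_notin_P.
have [u pk_u /andP [Tux _]] := connect_lastP pk_x neq_kx.
by exists u; rewrite /induced T_sym Tux xS inE inB pk_u.
Qed.

Lemma G'_nbr x : x \in S -> exists y, G' x y.
Proof.
move=> xS; case: (boolP (x \in P)) => [/path_vertsP [i le_ik ->]|xP].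
  case: (ltnP i k) => [lt_ik|le_ki]; first by exists (p i.+1); case: (G'_step lt_ik).
  rewrite (_ : i = k); last lia.
  exists (p k.-1); have lt_k1k : k.-1 < k by lia.
  by case: (G'_step lt_k1k); rewrite (ltn_predK k_gt0).
have [y Gxy] := G_nbr xS.
by exists (rev_path y); have := rev_path_edge Gxy; rewrite rev_path_id.
Qed.

Lemma nwalks_G_p0 l : nwalks G l.+1 (p 0) = nwalks G l (p 1).
Proof.
rewrite /= (big_pred1 (p 1)) // => y.
by apply/idP/eqP => [/G_p0 //|->]; case: (G_step k_gt0).
Qed.

Lemma nwalks_G'_leS l x : x \in S -> nwalks G' l x <= nwalks G' l.+1 x.
Proof.
have G'_S y z : G' y z -> z \in S by case/and3P.
exact: nwalks_leS G'_S G'_nbr l x.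
Qed.

Lemma nwalks_le_even : ~~ odd k -> forall l, nwalks G l (p 0) <= nwalks G' l (p 0).
Proof.
move=> k_even l; have k_eq : k = (k./2).*2 by rewrite -{1}(odd_double_half k) (negbTE k_even).
set m := k./2 in k_eq; have m_gt0 : 0 < m by lia.
pose R x y := (exists2 i, i < m & x = p i /\ y = p i) \/ (x \in S /\ y = rev_path x).
have R_p j : j <= m -> R (p j) (p j).
  move=> le_jm; case: (ltnP j m) => [lt_jm|le_mj]; first by left; exists j.
  by right; rewrite p_in_S ?rev_path_p; try lia; split => //; congr p; lia.
apply: (@nwalks_le_sim _ _ _ R); last by left; exists 0.
move=> x y [[i lt_im [-> ->]]|[xS ->]].
- exists id; split => [a b _ _ //|a Ga].
  case: i lt_im Ga => [|i] lt_im Ga.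
    by rewrite (G_p0 Ga); split; [case: (G'_step k_gt0)|apply: R_p; lia].
  have lt_ik : i < k by lia.
  have lt_i1k : i.+1 < k by lia.
  case: (G_inner (ltn0Sn i) lt_i1k Ga) => ->.
    by split; [case: (G'_step lt_ik)|apply: R_p; lia].
  by split; [case: (G'_step lt_i1k)|apply: R_p; lia].
- exists rev_path; split => [a b _ _|a Ga]; first exact: rev_path_inj.
  by split; [exact: rev_path_edge|right; split => //; case/and3P: Ga].
Qed.

Lemma nwalks_le_odd h : h \in N -> odd k ->
  forall l, 1 <= l -> nwalks G l (p 0) <= nwalks G' l (p 0).
Proof.
move=> hN k_odd l l_gt0; have k_eq : k = (k./2).*2.+1 by rewrite -{1}(odd_double_half k) k_odd.
set m := k./2 in k_eq; have hP : h \notin P := N_notin_P hN.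
pose R x y := [\/ x = p 0 /\ y = h, exists2 i, 0 < i <= m & x = p i /\ y = p i.-1
                | x \in S /\ y = rev_path x].
have R_p j : 0 < j <= m.+1 -> R (p j) (p j.-1).
  move=> j_bounds; case: (ltnP m j) => [lt_mj|le_jm]; last by apply: Or32; exists j => //; lia.
  apply: Or33; split; first by apply: p_in_S; lia.
  by rewrite rev_path_p; [congr p|]; lia.
have R_sim x y : R x y -> exists f : V -> V, {in G x &, injective f} /\
                                            (forall a, G x a -> G' y (f a) /\ R a (f a)).
  case=> [[-> ->]|[i i_bounds [-> ->]]|[xS ->]].
  - exists (fun _ => p 0); split => [a b /G_p0 -> /G_p0 -> //|a /G_p0 ->].
    by split; [case: (G'_p0N hN)|apply: (R_p 1); lia].
  - have lt_ik : i < k by lia.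
    have i_gt0 : 1 <= i by lia.
    have neq_p : p i.-1 != p i.+1 by apply/eqP => /p_inj; lia.
    pose f a := if a == p i.+1 then p i else if i == 1 then h else p i.-2.
    have f_prev_neq : (if i == 1 then h else p i.-2) != p i.
      case: ifP => _; apply/eqP; last by move/p_inj; lia.
      by move=> E; move: hP; rewrite E mem_path_verts //; lia.
    exists f; split.
      move=> a b /(G_inner i_gt0 lt_ik) Ea /(G_inner i_gt0 lt_ik) Eb.
      case: Ea Eb => -> [] -> //; rewrite /f eqxx (negbTE neq_p) => E;
        by move: f_prev_neq; rewrite E eqxx.
    move=> a /(G_inner i_gt0 lt_ik) [] ->; rewrite /f; last first.
      rewrite eqxx; split; last by apply: (R_p i.+1); lia.
      by case: (G'_step (_ : i.-1 < k)); rewrite ?(ltn_predK i_gt0) //; lia.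
    rewrite (negbTE neq_p); case: ifP => [/eqP i1|/negbT i_neq1].
      by subst i; split; [case: (G'_p0N hN)|apply: Or31].
    have lt_i2k : i.-2 < k by lia.
    have -> : i.-1 = (i.-2).+1 by lia.
    by split; [case: (G'_step lt_i2k)|apply: R_p; lia].
  - exists rev_path; split => [a b _ _|a Ga]; first exact: rev_path_inj.
    by split; [exact: rev_path_edge|apply: Or33; split => //; case/and3P: Ga].
case: l l_gt0 => [|l] // _; rewrite nwalks_G_p0.
apply: (leq_trans (@nwalks_le_sim _ _ _ R R_sim l _ _ (R_p 1 _))); first lia.
exact/nwalks_G'_leS/p_in_S.
Qed.

Lemma switched_N0 : N = set0 -> G' =2 G.
Proof.
by move=> N0 x y; rewrite /induced /switched N0 !in_set0 !andbF !andbT !orbF.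
Qed.

Lemma nwalks_le_switched l : 1 <= l -> nwalks G l (p 0) <= nwalks G' l (p 0).
Proof.
move=> l_gt0; have [N0|[h hN]] := set_0Vmem N.
  apply: (@nwalks_le_sim _ _ _ eq) => // x _ <-; exists id.
  by split=> // a Ga; rewrite switched_N0.
case k_odd: (odd k); first exact: nwalks_le_odd hN k_odd l l_gt0.
by apply: nwalks_le_even; rewrite k_odd.
Qed.

End SwitchedPath.

Theorem corollary5 (V : finType) (T : rel V) (p : nat -> V) (k : nat) :
  is_tree T ->
  (1 <= k)%N ->
  is_path_in T p k ->
  (forall i, (1 <= i)%N -> (i <= k.-1)%N -> deg T (p i) = 2%N) ->
  forall l : nat, (1 <= l)%N ->
    ((walks l (p 0%N) (induced T (compB T p k :|: path_verts p k)))%:Z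
       - (walks l (p 0%N) (path_edge p k))%:Z
     <= (walks l (p 0%N) (induced (switched T p k) (compB T p k :|: path_verts p k)))%:Z
       - (walks l (p 0%N) (path_edge p k))%:Z)%R.
Proof.
move=> T_tree k_gt0 p_path deg_inner l l_gt0.
by rewrite lerD2r lez_nat !walksE nwalks_le_switched.
Qed.
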